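(* Let $a,N$ be natural numbers and let $K$ be a closed subset of $([0,1]^a)^N$. Let $X(K)=\{x\in([0,1]^a)^{\mathbb{Z}}:\exists \ell\in\mathbb{Z}\ \forall n\in\mathbb{Z},\ x|_{\ell+nN}^{\ell+(n+1)N-1}\in K\}$. Then $\overline{\mathrm{mdim}}_{\mathrm{M}}(X(K),\sigma,D)\le \frac{\overline{\dim}_{\mathrm{M}}(K,\|\cdot\|_\infty)}{N}$.
   Context: For $x=(x_n)_{n\in\mathbb{Z}}\in([0,1]^a)^{\mathbb{Z}}$ and integers $\ell<m$, $x|_\ell^m=(x_\ell,\dots,x_m)\in([0,1]^a)^{m-\ell+1}$. $\sigma$ is the shift $(x_n)_n\mapsto(x_{n+1})_n$; $X(K)$ is a shift-invariant closed set. $D((x_n),(y_n))=\sum_{n\in\mathbb{Z}}2^{-|n|}\|x_n-y_n\|_\infty$ with $\|\cdot\|_\infty$ the max norm; on $([0,1]^a)^N\subset\mathbb{R}^{aN}$, $\|\cdot\|_\infty$ is the max over all coordinates. For a compact metric space $(E,\rho)$, $\#(E,\rho,\varepsilon)$ is the minimal number of open sets of $\rho$-diameter $<\varepsilon$ covering $E$, and $\overline{\dim}_{\mathrm{M}}(E,\rho)=\limsup_{\varepsilon\to0}\frac{\log\#(E,\rho,\varepsilon)}{\log(1/\varepsilon)}$. For $(X,T)$ with metric $d$, $d_L(x,y)=\max_{0\le n<L}d(T^nx,T^ny)$, and $\overline{\mathrm{mdim}}_{\mathrm{M}}(X,T,d)=\limsup_{\varepsilon\to0}\lim_{L\to\infty}\frac{\log\#(X,d_L,\varepsilon)}{L\log(1/\varepsilon)}$.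 *)

From HB Require Import structures.
From mathcomp Require Import all_boot all_order all_algebra.
From mathcomp Require Import all_classical all_reals all_analysis.
Set Implicit Arguments. Unset Strict Implicit. Unset Printing Implicit Defensive.
Import Order.TTheory GRing.Theory Num.Theory.
Import numFieldNormedType.Exports.
Local Open Scope classical_set_scope.
Local Open Scope ring_scope.

Section Defs.
Variable R : realType.

Definition p_open_in {T : Type} (E : set T) (rho : T -> T -> R) (U : set T) :=
  forall x, U x -> exists2 r : R, 0 < r & forall y, E y -> rho x y < r -> U y.

(* rho-diameter of U, in the extended reals (sup of the empty set is -oo) *)
Definition p_diam {T : Type} (rho : T -> T -> R) (U : set T) : \bar R :=
  ereal_sup [set (rho x y)%:E | x in U & y in U].

Definition p_has_cover {T : Type} (E : set T) (rho : T -> T -> R) (eps : R) (n : nat) :=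
  exists U : 'I_n -> set T,
    [/\ forall i, U i `<=` E,
        forall i, p_open_in E rho (U i),
        forall i, (p_diam rho (U i) < eps%:E)%E
      & E `<=` \bigcup_i U i].

(* #(E, rho, eps) : minimal number of such open sets (+oo if none) *)
Definition p_covnum {T : Type} (E : set T) (rho : T -> T -> R) (eps : R) : \bar R :=
  ereal_inf [set (n%:R)%:E | n in p_has_cover E rho eps].

Definition p_logE (x : \bar R) : \bar R :=
  match x with
  | EFin r => (ln r)%:E
  | +oo%E => +oo%E
  | -oo%E => -oo%E
  end.

Definition upper_mink_dim {T : Type} (E : set T) (rho : T -> T -> R) : \bar R :=
  limf_esup (fun eps : R => (p_logE (p_covnum E rho eps) * (ln (eps^-1))^-1%:E)%E)
            (0 : R)^'+.

Definition p_bowen {T : Type} (d : T -> T -> R) (f : T -> T) (L : nat) (x y : T) : R :=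
  \big[Num.max/0]_(n < L) d (iter n f x) (iter n f y).

(* upper metric mean dimension:
   limsup_{eps -> 0+} lim_{L -> oo} log #(X, d_L, eps) / (L log (1/eps));
   the limit in L is taken as a limsup *)
Definition upper_mmdim {T : Type} (X : set T) (f : T -> T) (d : T -> T -> R) : \bar R :=
  limf_esup (fun eps : R =>
     limn_esup (fun L : nat =>
       (p_logE (p_covnum X (p_bowen d f L) eps) * ((L%:R * ln (eps^-1))^-1)%:E)%E))
   (0 : R)^'+.

Definition p_in_cube (a : nat) (p : 'I_a -> R) := forall i, 0 <= p i <= 1.

Definition p_supdist (a : nat) (p q : 'I_a -> R) : R :=
  \big[Num.max/0]_(i < a) `|p i - q i|.

Definition supdistN (a N : nat) (p q : 'I_N -> 'I_a -> R) : R :=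
  \big[Num.max/0]_(j < N) \big[Num.max/0]_(i < a) `|p j i - q j i|.

Definition in_cubeN (a N : nat) (p : 'I_N -> 'I_a -> R) := forall j, p_in_cube (p j).

Definition closed_cubeN (a N : nat) (K : set ('I_N -> 'I_a -> R)) :=
  K `<=` in_cubeN (a:=a) (N:=N) /\
  forall y, in_cubeN y -> ~ K y ->
    exists2 r : R, 0 < r & forall z, in_cubeN z -> supdistN y z < r -> ~ K z.

Definition p_seqZ (a : nat) := int -> 'I_a -> R.

Definition p_shift (a : nat) (x : p_seqZ a) : p_seqZ a := fun n => x (n + 1)%R.

(* D(x,y) = sum_{n in Z} 2^{-|n|} ||x_n - y_n||_oo, written as a series over k = |n| *)
Definition p_Dterm (a : nat) (x y : p_seqZ a) (k : nat) : R :=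
  if k == 0%N then p_supdist (x 0) (y 0)
  else (2^-1) ^+ k * (p_supdist (x k%:Z) (y k%:Z) + p_supdist (x (- k%:Z)) (y (- k%:Z))).

Definition p_Dmetric (a : nat) (x y : p_seqZ a) : R := limn (series (p_Dterm x y)).

Definition p_restr (a N : nat) (x : p_seqZ a) (l : int) : 'I_N -> 'I_a -> R :=
  fun j => x (l + (nat_of_ord j)%:Z)%R.

Definition p_XK (a N : nat) (K : set ('I_N -> 'I_a -> R)) : set (p_seqZ a) :=
  [set x | (forall n, p_in_cube (x n)) /\
           exists l : int, forall n : int, K (@p_restr a N x (l + n * N%:Z)%R)].

End Defs.

From HB Require Import structures.
From mathcomp Require Import all_boot all_order all_algebra.
From mathcomp Require Import all_classical all_reals all_analysis.
From mathcomp Require Import zify ring lra.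
Set Implicit Arguments. Unset Strict Implicit. Unset Printing Implicit Defensive.
Import Order.TTheory GRing.Theory Num.Theory.
Import numFieldNormedType.Exports.
Local Open Scope classical_set_scope.
Local Open Scope ring_scope.

(* Cover K by n open sets of sup-diameter < delta.  Up to an error 2^(1-m),
   the distance d_L only sees the coordinates in [-m, L + m), and these meet
   at most 2m + 3 + L/N of the N-blocks of a point of X(K).  Recording the
   phase of the blocks and which covering set contains each of them gives a
   cover of X(K) by N n^(2m + 3 + L/N) open sets of d_L-diameter
   <= 12 delta + 2^(1-m).  Hence log #(X(K), d_L, eps) / (L log(1/eps)) tends
   to at most log n / (N log(1/eps)) as L -> oo, and taking delta = eps/20
   changes log(1/delta) only by a factor tending to 1 as eps -> 0. *)

Section limf_esup_near.
Variables (T : choiceType) (X : filteredType T) (R : realType).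
Variables (F : set_system X) (f : X -> \bar R).
Local Open Scope ereal_scope.

Lemma limf_esup_le b : (\forall x \near F, f x <= b) -> limf_esup f F <= b.
Proof.
move=> Fb; rewrite limf_esupE; apply: ge_ereal_inf.
exists (ereal_sup (f @` [set x | f x <= b])); first by exists [set x | f x <= b].
by apply: ge_ereal_sup => _ [x fxb <-].
Qed.

Lemma limf_esup_ge {FF : ProperFilter F} b :
  (\forall x \near F, b <= f x) -> b <= limf_esup f F.
Proof.
move=> Fb; rewrite limf_esupE; apply: le_ereal_inf_tmp => _ [V FV <-].
have [x [Vx bfx]] := filter_ex (filterI FV Fb).
by apply: le_trans bfx _; apply: ereal_sup_ubound; exists x.
Qed.

Lemma limf_esup_lt {FF : Filter F} c :
  limf_esup f F < c -> \forall x \near F, f x < c.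
Proof.
rewrite limf_esupE => /ereal_inf_lt [_ [V FV <-] Vc].
apply: filterS FV => x Vx; apply: le_lt_trans Vc.
by apply: ereal_sup_ubound; exists x.
Qed.

End limf_esup_near.

Lemma near_at_right0P (R : realType) {P : R -> Prop} :
  (\forall x \near 0^'+, P x) <->
  exists2 e : R, 0 < e & forall x, 0 < x -> x < e -> P x.
Proof.
split=> [/nbhs_ballP [e e0 eP]|[e e0 eP]].
  exists e => // x x0 xe; apply: eP => //.
  by rewrite /ball /= sub0r normrN gtr0_norm.
near=> x; apply: eP; near: x; [exact: nbhs_right_gt|exact: nbhs_right_lt].
Unshelve. all: by end_near.
Qed.

Section geometric_sums.
Variable R : realType.

Lemma sum_expr_tail_le (x : R) m K : 0 < x < 1 ->
  \sum_(m <= k < K) x ^+ k <= x ^+ m / (1 - x).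
Proof.
move=> /andP[x0 x1].
have [Km|mK] := leqP K m.
  by rewrite big_geq // divr_ge0 ?exprn_ge0 ?ltW // subr_gt0.
rewrite -(subnKC (ltnW mK)) geometric_partial_tail.
by apply: geometric_le_lim; rewrite ?exprn_ge0 ?ltW // gtr0_norm.
Qed.

Lemma sum_half_pow_tail_le m K :
  \sum_(m <= k < K) (2^-1 : R) ^+ k <= 2 * (2^-1) ^+ m.
Proof.
have -> : 2 * (2^-1) ^+ m = (2^-1) ^+ m / (1 - 2^-1) :> R.
  by rewrite (_ : 1 - 2^-1 = 2^-1 :> R) ?invrK 1?mulrC //; lra.
by apply: sum_expr_tail_le; apply/andP; split; lra.
Qed.

Lemma sum_half_pow_le K : \sum_(k < K) (2^-1 : R) ^+ k <= 2.
Proof. by have := sum_half_pow_tail_le 0 K; rewrite big_mkord expr0 mulr1. Qed.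

End geometric_sums.

Section ln_nat.
Variable R : realType.

Lemma ln_nat_ge0 k : 0 <= ln (k%:R : R).
Proof. by case: k => [|k]; [rewrite ln0 | apply: ln_ge0; rewrite ler1n]. Qed.

Lemma ler_ln_nat j k : (j <= k)%N -> ln (j%:R : R) <= ln (k%:R : R).
Proof.
case: j => [|j] jk; first by rewrite ln0 // ln_nat_ge0.
by rewrite ler_ln ?ler_nat // posrE ltr0n //; lia.
Qed.

End ln_nat.

Section covering_numbers.
Variables (R : realType) (T : Type) (E : set T) (rho : T -> T -> R).

Lemma le_diam (V : set T) x y : V x -> V y -> ((rho x y)%:E <= p_diam rho V)%E.
Proof. by move=> Vx Vy; apply: ereal_sup_ubound; exists x => //; exists y. Qed.

Lemma covnum_le eps k : p_has_cover E rho eps k -> (p_covnum E rho eps <= k%:R%:E)%E.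
Proof. by move=> Ek; apply: ereal_inf_lbound; exists k. Qed.

Lemma covnum_finite eps : (p_covnum E rho eps < +oo)%E ->
  exists k, p_has_cover E rho eps k /\ p_covnum E rho eps = k%:R%:E.
Proof.
move=> fin.
have ex : exists k, `[< p_has_cover E rho eps k >].
  apply: contrapT => none.
  suff : [set k%:R%:E | k in p_has_cover E rho eps] = set0 :> set (\bar R).
    by move=> E0; move: fin; rewrite /p_covnum E0 ereal_inf0 ltxx.
  by apply/seteqP; split => [_ [k Ek <-]|//]; apply: none; exists k; exact/asboolP.
case: (ex_minnP ex) => k /asboolP Ek kmin; exists k; split => //.
apply/eqP; rewrite eq_le covnum_le //=.
apply: le_ereal_inf_tmp => _ [j Ej <-]; rewrite lee_fin ler_nat.
by apply: kmin; exact/asboolP.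
Qed.

Lemma logcov_ge0 eps : (0 <= p_logE (p_covnum E rho eps))%E.
Proof.
have [fin|] := boolP (p_covnum E rho eps < +oo)%E.
  by have [k [_ ->]] := covnum_finite fin; rewrite /= lee_fin ln_nat_ge0.
by rewrite -leNgt leye_eq => /eqP ->; exact: leey.
Qed.

Lemma logcov_le eps k : p_has_cover E rho eps k ->
  (p_logE (p_covnum E rho eps) <= (ln (k%:R : R))%:E)%E.
Proof.
move=> Ek; have Ek_le := covnum_le Ek.
have [j [_ Ej]] := covnum_finite (le_lt_trans Ek_le (ltry _)).
by move: Ek_le; rewrite Ej /= !lee_fin ler_nat; apply: ler_ln_nat.
Qed.

Lemma mink_dim_ge0 : (0 <= upper_mink_dim E rho)%E.
Proof.
apply: limf_esup_ge; apply/near_at_right0P; exists 1 => // d d0 d1.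
apply: mule_ge0; first exact: logcov_ge0.
by rewrite lee_fin invr_ge0 ln_ge0 // invf_ge1 // ltW.
Qed.

Lemma cover_of_mink_ratio_lt d c : 0 < d -> d < 1 ->
  (p_logE (p_covnum E rho d) * (ln d^-1)^-1%:E < c%:E)%E ->
  exists n, p_has_cover E rho d n /\ ln (n%:R : R) <= c * ln d^-1.
Proof.
move=> d0 d1; have ell0 : 0 < ln d^-1 by rewrite ln_gt0 // invf_gt1.
have [fin|] := boolP (p_covnum E rho d < +oo)%E.
  have [k [Ek ->]] := covnum_finite fin.
  by rewrite /= -EFinM lte_fin ltr_pdivrMr // => /ltW; exists k.
rewrite -leNgt leye_eq => /eqP -> /=.
by rewrite gt0_mulye ?lte_fin ?invr_gt0.
Qed.

End covering_numbers.

Section bowen.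
Variables (R : realType) (T : Type) (d : T -> T -> R) (f : T -> T).

Lemma bowen_le L x y b : 0 <= b ->
  (forall n, (n < L)%N -> d (iter n f x) (iter n f y) <= b) -> p_bowen d f L x y <= b.
Proof. by move=> b0 dle; apply: bigmax_le => // n _; exact: dle. Qed.

Lemma le_bowen L x y : (0 < L)%N -> d x y <= p_bowen d f L x y.
Proof.
by move=> L0; exact: (le_bigmax _ (fun n : 'I_L => d (iter n f x) (iter n f y)) (Ordinal L0)).
Qed.

End bowen.

Section cube_distances.
Variables (R : realType) (a N : nat).

Lemma supdist_ge0 (p q : 'I_a -> R) : 0 <= p_supdist p q.
Proof. exact: bigmax_ge_id. Qed.

Lemma ler_supdist (p q : 'I_a -> R) i : `|p i - q i| <= p_supdist p q.
Proof. exact: (le_bigmax _ (fun i => `|p i - q i|)). Qed.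

Lemma supdist_le1 (p q : 'I_a -> R) : p_in_cube p -> p_in_cube q -> p_supdist p q <= 1.
Proof.
move=> cp cq; apply: bigmax_le => // i _.
have /andP[? ?] := cp i; have /andP[? ?] := cq i.
by rewrite ler_norml; apply/andP; split; lra.
Qed.

Lemma supdistN_ge0 (p q : 'I_N -> 'I_a -> R) : 0 <= supdistN p q.
Proof. exact: bigmax_ge_id. Qed.

Lemma ler_supdistN (p q : 'I_N -> 'I_a -> R) j i : `|p j i - q j i| <= supdistN p q.
Proof.
apply: le_trans (le_bigmax _ (fun j => \big[Num.max/0]_(i < a) `|p j i - q j i|) j).
exact: (le_bigmax _ (fun i => `|p j i - q j i|)).
Qed.

Lemma supdistN_le (p q : 'I_N -> 'I_a -> R) b : 0 <= b ->
  (forall j i, `|p j i - q j i| <= b) -> supdistN p q <= b.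
Proof. by move=> b0 pqb; apply: bigmax_le => // j _; apply: bigmax_le => // i _. Qed.

End cube_distances.

Section shift_metric.
Variables (R : realType) (a : nat).
Implicit Types (x y : p_seqZ R a).
Local Notation D := (@p_Dmetric R a).
Local Notation sigma := (@p_shift R a).

Definition in_cubeZ x := forall n, p_in_cube (x n).

Lemma Dterm_ge0 x y k : 0 <= p_Dterm x y k.
Proof.
rewrite /p_Dterm; case: eqP => _; first exact: supdist_ge0.
by rewrite mulr_ge0 ?exprn_ge0 ?addr_ge0 ?supdist_ge0.
Qed.

Lemma DtermE x y k : (0 < k)%N ->
  p_Dterm x y k = (2^-1) ^+ k *
    (p_supdist (x k%:Z) (y k%:Z) + p_supdist (x (- k%:Z)) (y (- k%:Z))).
Proof. by case: k. Qed.

Lemma Dterm_le x y k : in_cubeZ x -> in_cubeZ y -> p_Dterm x y k <= 2 * (2^-1) ^+ k.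
Proof.
move=> cx cy; rewrite /p_Dterm; case: eqP => [->|_].
  by rewrite expr0 mulr1; apply: le_trans (supdist_le1 (cx _) (cy _)) _; lra.
rewrite mulrC ler_pM2r ?exprn_gt0 //.
have := supdist_le1 (cx k%:Z) (cy k%:Z).
by have := supdist_le1 (cx (- k%:Z)) (cy (- k%:Z)); lra.
Qed.

Lemma is_cvg_Dseries x y : in_cubeZ x -> in_cubeZ y -> cvgn (series (p_Dterm x y)).
Proof.
move=> cx cy; apply: nondecreasing_is_cvgn.
  by apply: nondecreasing_series => k _ _; exact: Dterm_ge0.
exists 4 => _ [n _ <-]; rewrite seriesEord /=.
apply: le_trans (_ : \sum_(k < n) 2 * (2^-1) ^+ k <= 4).
  by apply: ler_sum => k _; exact: Dterm_le.
by rewrite -mulr_sumr; have := @sum_half_pow_le R n; lra.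
Qed.

Lemma Dterm_le_D x y k : in_cubeZ x -> in_cubeZ y -> p_Dterm x y k <= D x y.
Proof.
move=> cx cy; apply: limr_ge; first exact: is_cvg_Dseries.
near=> n; have kn : (k < n)%N by near: n; exists k.+1.
rewrite seriesEord /= (bigD1 (Ordinal kn)) //= lerDl.
by apply: sumr_ge0 => i _; exact: Dterm_ge0.
Unshelve. all: by end_near.
Qed.

Lemma D_ge0 x y : in_cubeZ x -> in_cubeZ y -> 0 <= D x y.
Proof. by move=> cx cy; apply: le_trans (Dterm_le_D 0 cx cy); exact: Dterm_ge0. Qed.

Lemma D_le x y (g : nat -> R) b : in_cubeZ x -> in_cubeZ y ->
  (forall k, p_Dterm x y k <= g k) -> (forall K, \sum_(k < K) g k <= b) -> D x y <= b.
Proof.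
move=> cx cy Dg gb; apply: limr_le; first exact: is_cvg_Dseries.
near=> n; rewrite seriesEord /=; apply: le_trans (gb n).
by apply: ler_sum => k _; exact: Dg.
Unshelve. all: by end_near.
Qed.

Lemma supdist_le_Dterm x y (t : int) :
  p_supdist (x t) (y t) <= 2 ^+ `|t|%N * p_Dterm x y `|t|%N.
Proof.
have two_sided k s : (0 < k)%N -> s = k%:Z \/ s = - k%:Z ->
    p_supdist (x s) (y s) <= 2 ^+ k * p_Dterm x y k.
  move=> k0 ks; rewrite DtermE // mulrA -exprMn mulfV // expr1n mul1r.
  have := supdist_ge0 (x k%:Z) (y k%:Z); have := supdist_ge0 (x (- k%:Z)) (y (- k%:Z)).
  by case: ks => ->; lra.
case: t => [[|n]|n]; first by rewrite /= expr0 mul1r.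
  by apply: two_sided => //; left.
by apply: two_sided => //; right; rewrite NegzE.
Qed.

Lemma coord_le_D x y t c : in_cubeZ x -> in_cubeZ y ->
  `|x t c - y t c| <= 2 ^+ `|t|%N * D x y.
Proof.
move=> cx cy; apply: le_trans (ler_supdist _ _ c) _.
apply: le_trans (supdist_le_Dterm x y t) _.
by rewrite ler_pM2l ?exprn_gt0 //; exact: Dterm_le_D.
Qed.

Lemma D_le_window x y m th : in_cubeZ x -> in_cubeZ y -> 0 <= th ->
  (forall i : int, (`|i| <= m)%N -> p_supdist (x i) (y i) <= th) ->
  D x y <= 4 * th + 2 * (2^-1) ^+ m.
Proof.
move=> cx cy th0 near_th.
pose g k := 2 * th * (2^-1) ^+ k + (if (m < k)%N then 2 * (2^-1) ^+ k else 0).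
apply: (D_le (g := g)) => // [k|K].
  have hk : 0 < (2^-1 : R) ^+ k by rewrite exprn_gt0.
  rewrite /g; case: (ltnP m k) => [mk|km].
    by apply: le_trans (Dterm_le k cx cy) _; rewrite lerDr !mulr_ge0 // ltW.
  rewrite addr0; case: (posnP k) => [->|k0].
    by rewrite /p_Dterm /= expr0 mulr1; have := near_th 0 (leq0n m); lra.
  rewrite DtermE // [leRHS]mulrC; apply: ler_wpM2l; first exact: ltW.
  have := near_th k%:Z km; have := near_th (- k%:Z); rewrite abszN => /(_ km).
  lra.
rewrite /g big_split /= -mulr_sumr.
have -> : \sum_(k < K) (if (m < k)%N then 2 * (2^-1) ^+ k else 0) =
    2 * \sum_(m.+1 <= k < K) (2^-1 : R) ^+ k.
  by rewrite big_geq_mkord mulr_sumr [RHS]big_mkcond.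
have := @sum_half_pow_le R K; have := @sum_half_pow_tail_le R m.+1 K.
rewrite exprS; have : 0 < (2^-1 : R) ^+ m by rewrite exprn_gt0.
nra.
Qed.

Lemma iter_shift n x i : iter n sigma x i = x (i + n%:Z).
Proof.
elim: n i => [|n IH] i; first by rewrite addr0.
by rewrite iterS /p_shift IH -addn1 PoszD addrAC addrA.
Qed.

Lemma in_cubeZ_iter n x : in_cubeZ x -> in_cubeZ (iter n sigma x).
Proof. by move=> cx i; rewrite iter_shift. Qed.

End shift_metric.

Section block_cover.
Variables (R : realType) (a N : nat).
Hypothesis N_gt0 : (0 < N)%N.
Variables (K : set ('I_N -> 'I_a -> R)) (n : nat) (U : 'I_n -> set ('I_N -> 'I_a -> R)).
Variable delta : R.
Hypothesis delta_gt0 : 0 < delta.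
Hypothesis U_diam : forall i, (p_diam (@supdistN R a N) (U i) < delta%:E)%E.
Hypothesis K_cover : K `<=` \bigcup_i U i.
Variables m L : nat.
Hypothesis L_gt0 : (0 < L)%N.

Local Notation X := (p_XK K).
Local Notation D := (@p_Dmetric R a).
Local Notation sigma := (@p_shift R a).
Local Notation dL := (p_bowen D sigma L).

Definition nblocks := (2 * m + 3 + L %/ N)%N.

Definition block_start (r : 'I_N) (j : nat) : int := r%:Z - (N * m.+1)%:Z + (j * N)%:Z.

Definition block_reach := (N * m.+1 + nblocks * N)%N.

Definition cell_label := ('I_N * {ffun 'I_nblocks -> 'I_n})%type.

(* In the cell of (r, f), the nblocks blocks of length N starting at
   block_start r j cover the window [-m, L + m) seen by d_L, and the j-th one
   is uniformly within th < delta of the covering set U (f j); the slack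
   delta - th makes the cell open. *)
Definition cell (p : cell_label) : set (p_seqZ R a) :=
  [set y | X y /\ exists z : 'I_nblocks -> ('I_N -> 'I_a -> R),
     (forall j, U (p.2 j) (z j)) /\
     exists2 th, th < delta &
       forall j : 'I_nblocks,
         supdistN (@p_restr R a N y (block_start p.1 j)) (z j) <= th].

Lemma window_in_blocks (r : 'I_N) k (i : int) : (k < L)%N -> (`|i| <= m)%N ->
  exists j : 'I_nblocks, exists jj : 'I_N, i + k%:Z = block_start r j + jj%:Z.
Proof.
move=> kL im.
pose u : int := i + k%:Z - r%:Z + (N * m.+1)%:Z.
have u_ge0 : 0 <= u by rewrite /u; have := ltn_ord r; nia.
have eu : u = `|u|%N%:Z by lia.
have ju : (`|u|%N %/ N < nblocks)%N.
  rewrite ltn_divLR // /nblocks.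
  have : (`|u| <= m + L + N * m + N)%N by move: eu; rewrite /u; have := ltn_ord r; lia.
  by have := divn_eq L N; have := ltn_pmod L N_gt0; nia.
exists (Ordinal ju), (Ordinal (ltn_pmod `|u|%N N_gt0)).
by move: eu; rewrite /block_start /u /=; have := divn_eq `|u|%N N; lia.
Qed.

Lemma block_le_reach (r : 'I_N) (j : 'I_nblocks) (jj : 'I_N) :
  (absz (block_start r j + jj%:Z)%R <= block_reach)%N.
Proof.
rewrite /block_start /block_reach.
by have := ltn_ord r; have := ltn_ord j; have := ltn_ord jj; nia.
Qed.

Lemma cell_sub_XK p : cell p `<=` X.
Proof. by move=> y []. Qed.

Lemma cell_in_cubeZ p y : cell p y -> in_cubeZ y.
Proof. by case=> [[]]. Qed.

Lemma cell_coord p y : cell p y ->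
  exists z : 'I_nblocks -> ('I_N -> 'I_a -> R), (forall j, U (p.2 j) (z j)) /\
  exists2 th, th < delta &
    forall (j : 'I_nblocks) (jj : 'I_N) c,
      `|y (block_start p.1 j + jj%:Z) c - z j jj c| <= th.
Proof.
move=> [_ [z [Uz [th th_lt yz]]]]; exists z; split => //; exists th => // j jj c.
exact: le_trans (ler_supdistN _ _ jj c) (yz j).
Qed.

Lemma cell_bowen_le p y1 y2 : cell p y1 -> cell p y2 ->
  dL y1 y2 <= 12 * delta + 2 * (2^-1) ^+ m.
Proof.
move=> y1p y2p.
have [z1 [Uz1 [th1 th1_lt y1z1]]] := cell_coord y1p.
have [z2 [Uz2 [th2 th2_lt y2z2]]] := cell_coord y2p.
have half_m : 0 <= 2 * (2^-1 : R) ^+ m by rewrite mulr_ge0 ?exprn_ge0.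
apply: bowen_le => [|k kL]; first by rewrite addr_ge0 ?mulr_ge0 ?ltW.
rewrite (_ : 12 * delta = 4 * (3 * delta)); last by ring.
have [c1 c2] := (cell_in_cubeZ y1p, cell_in_cubeZ y2p).
have delta3_ge0 : 0 <= 3 * delta by rewrite mulr_ge0 // ltW.
apply: D_le_window; [exact: in_cubeZ_iter|exact: in_cubeZ_iter|exact: delta3_ge0|].
move=> i im; rewrite !iter_shift; apply: bigmax_le => [|c _]; first exact: delta3_ge0.
have [j [jj ->]] := window_in_blocks p.1 kL im.
have z1z2 : `|z1 j jj c - z2 j jj c| < delta.
  apply: le_lt_trans (ler_supdistN _ _ jj c) _; rewrite -lte_fin.
  by apply: le_lt_trans (U_diam (p.2 j)); apply: le_diam; [exact: Uz1|exact: Uz2].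
have y1z := y1z1 j jj c; have := y2z2 j jj c; rewrite distrC => y2z.
apply: le_trans (ler_distD (z1 j jj c) _ _) _.
by apply: le_trans (lerD (lexx _) (ler_distD (z2 j jj c) _ _)) _; lra.
Qed.

Lemma cell_diam_lt p eps : 12 * delta + 2 * (2^-1) ^+ m < eps ->
  (p_diam dL (cell p) < eps%:E)%E.
Proof.
move=> eps_gt; apply: le_lt_trans (_ : _ <= (12 * delta + 2 * (2^-1) ^+ m)%:E)%E _.
  apply: ge_ereal_sup => _ [y1 y1p [y2 y2p <-]].
  by rewrite lee_fin (cell_bowen_le y1p y2p).
by rewrite lte_fin.
Qed.

Lemma cell_open p : p_open_in X dL (cell p).
Proof.
move=> y yp; have cy := cell_in_cubeZ yp.
move: (yp) => [_ [z [Uz [th th_lt yz]]]].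
have reach_gt0 : 0 < (2 : R) ^+ block_reach by rewrite exprn_gt0.
have th_ge0 : 0 <= th.
  have nblocks_gt0 : (0 < nblocks)%N by rewrite /nblocks addnAC addnS.
  exact: le_trans (supdistN_ge0 _ _) (yz (Ordinal nblocks_gt0)).
exists ((delta - th) / 2 / 2 ^+ block_reach); first by rewrite !divr_gt0 //; lra.
move=> y' Xy' yy'; have cy' : in_cubeZ y' by case: Xy'.
split => //; exists z; split => //; exists ((delta + th) / 2); first lra.
have Dyy' : 2 ^+ block_reach * D y y' <= (delta - th) / 2.
  rewrite mulrC -ler_pdivlMr //; apply/ltW; apply: le_lt_trans yy'.
  exact: le_bowen.
move=> j; apply: supdistN_le => [|jj c]; first lra.
have := le_trans (ler_supdistN _ _ jj c) (yz j); rewrite /p_restr /=.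
set t := block_start p.1 j + jj%:Z => ytz.
have : `|y t c - y' t c| <= 2 ^+ block_reach * D y y'.
  apply: le_trans (coord_le_D t c cy cy') _.
  rewrite ler_wpM2r ?D_ge0 // ler_weXn2l // ?ler1n //; exact: block_le_reach.
rewrite distrC => yy'_t.
by apply: le_trans (ler_distD (y t c) _ _) _; lra.
Qed.

Lemma XK_sub_cells x : X x -> exists p, cell p x.
Proof.
move=> Xx; move: (Xx) => [_ [l Kl]].
have Nz : N%:Z != 0 by rewrite eqz_nat -lt0n.
have r_lt : (`|(l %% N%:Z)%Z| < N)%N.
  have : (l %% N%:Z)%Z < N%:Z by apply: ltz_pmod; rewrite ltz_nat.
  by have := modz_ge0 l Nz; lia.
pose r := Ordinal r_lt.
have Kblock j : K (@p_restr R a N x (block_start r j)).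
  rewrite (_ : block_start r j = l + (j%:Z - m.+1%:Z - (l %/ N%:Z)%Z) * N%:Z); first exact: Kl.
  rewrite /block_start /= gez0_abs ?modz_ge0 // {2}(divz_eq l N%:Z) !PoszM; ring.
have /choice [f Uf] :
    forall j : 'I_nblocks, exists i, U i (@p_restr R a N x (block_start r j)).
  by move=> j; have [i _ Ui] := K_cover (Kblock j); exists i.
exists (r, [ffun j => f j]); split => //.
exists (fun j => @p_restr R a N x (block_start r j)).
split; first by move=> j /=; rewrite ffunE.
by exists 0 => // j; apply: supdistN_le => // j' i; rewrite subrr normr0.
Qed.

Lemma XK_block_cover eps : 12 * delta + 2 * (2^-1) ^+ m < eps ->
  p_has_cover X dL eps (N * n ^ nblocks).
Proof.
move=> eps_gt.
have e : (N * n ^ nblocks = #|{: cell_label}|)%N by rewrite card_prod card_ffun !card_ord.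
exists (fun i => cell (enum_val (cast_ord e i))); split => [i|i|i|x /XK_sub_cells [p xp]].
- exact: cell_sub_XK.
- exact: cell_open.
- exact: cell_diam_lt.
by exists (cast_ord (esym e) (enum_rank p)) => //; rewrite cast_ordKV enum_rankK.
Qed.

End block_cover.

Section scale_arithmetic.
Variable R : realType.

Lemma exists_half_pow_lt (e : R) : 0 < e -> exists m, 2 * (2^-1) ^+ m < e.
Proof.
move=> e0; exists (Num.truncn (2 / e)); set m := Num.truncn (2 / e).
have : 2 / e < 2 ^+ m.
  apply: lt_le_trans (truncnS_gt (2 / e)) _.
  by rewrite -natrX ler_nat ltn_expl.
by rewrite exprVn ltr_pdivrMr ?exprn_gt0 // mulrC -ltr_pdivrMr.
Qed.

Lemma ln_natM_expn_le (N n B : nat) : (0 < N)%N ->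
  ln ((N * n ^ B)%:R : R) <= ln N%:R + B%:R * ln n%:R.
Proof.
move=> N0; case: n => [|n].
  case: B => [|B]; first by rewrite expn0 muln1 mul0r addr0.
  by rewrite exp0n // muln0 ln0 // mulr0 addr0 ln_nat_ge0.
rewrite natrM natrX lnM ?posrE ?exprn_gt0 ?ltr0n // lnXn ?ltr0n //.
by rewrite mulr_natl.
Qed.

Lemma ln_block_count_le (N n m L : nat) (ell eta : R) :
  (0 < N)%N -> 0 < ell -> 0 < eta ->
  (ln N%:R + (2 * m + 3)%:R * ln n%:R) / (eta * ell) < L%:R ->
  ln ((N * n ^ nblocks N m L)%:R) / (L%:R * ell) <= ln n%:R / (N%:R * ell) + eta.
Proof.
move=> N0 ell0 eta0 L_gt.
have Lpos : 0 < L%:R :> R by apply: le_lt_trans L_gt; rewrite divr_ge0 ?addr_ge0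
  ?mulr_ge0 ?ln_nat_ge0 // ltW ?mulr_gt0.
have Npos : 0 < N%:R :> R by rewrite ltr0n.
have blocks_le : (nblocks N m L)%:R <= (2 * m + 3)%:R + L%:R / N%:R :> R.
  by rewrite /nblocks natrD lerD2l ler_pdivlMr // -natrM ler_nat leq_divM.
have lnn0 := @ln_nat_ge0 R n.
rewrite ler_pdivrMr ?mulr_gt0 //.
apply: le_trans (ln_natM_expn_le _ _ N0) _.
have -> : (ln n%:R / (N%:R * ell) + eta) * (L%:R * ell) =
    L%:R / N%:R * ln n%:R + eta * ell * L%:R by field; rewrite !gt_eqF.
move: L_gt; rewrite ltr_pdivrMr ?mulr_gt0 // => L_gt.
have := ler_wpM2r lnn0 blocks_le; nra.
Qed.

Lemma ln_inv_div_le (C eps eta : R) : 0 < C -> 0 < eps -> 0 < eta ->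
  eps < expR (- (ln C / eta)) -> ln (eps / C)^-1 <= (1 + eta) * ln eps^-1.
Proof.
move=> C0 eps0 eta0 eps_lt.
have : ln C / eta < - ln eps by rewrite ltrNr -ltr_expR lnK ?posrE.
rewrite invf_div lnM ?posrE ?invr_gt0 // lnV ?posrE // ltr_pdivrMr // mulrC.
lra.
Qed.

End scale_arithmetic.

Section mean_dimension_bound.
Variables (R : realType) (a N : nat) (K : set ('I_N -> 'I_a -> R)).
Hypothesis N_gt0 : (0 < N)%N.

Local Notation X := (p_XK K).
Local Notation D := (@p_Dmetric R a).
Local Notation sigma := (@p_shift R a).
Local Notation dimK := (upper_mink_dim K (@supdistN R a N)).

Lemma limn_esup_XK_ratio_le (eps eta : R) n : 0 < eps -> eps < 1 -> 0 < eta ->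
  p_has_cover K (@supdistN R a N) (eps / 20) n ->
  (limn_esup (fun L : nat => p_logE (p_covnum X (p_bowen D sigma L) eps)
       * ((L%:R * ln eps^-1)^-1)%:E)
    <= (ln n%:R / (N%:R * ln eps^-1) + eta)%:E)%E.
Proof.
move=> eps0 eps1 eta0 [U [_ _ U_diam K_cover]].
have ell0 : 0 < ln eps^-1 by rewrite ln_gt0 // invf_gt1.
have [m m_small] := exists_half_pow_lt (divr_gt0 eps0 (ltr0n R 5)).
have cells_small : 12 * (eps / 20) + 2 * (2^-1) ^+ m < eps by lra.
set C := (ln N%:R + (2 * m + 3)%:R * ln n%:R) / (eta * ln eps^-1).
apply: limf_esup_le; exists (Num.truncn C).+1 => // L /= L_ge.
have C_lt : C < L%:R by apply: lt_le_trans (truncnS_gt _) _; rewrite ler_nat.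
have L0 : (0 < L)%N by apply: leq_trans L_ge.
have cover := XK_block_cover N_gt0 (divr_gt0 eps0 (ltr0n R 20)) U_diam K_cover L0
  cells_small.
apply: le_trans (lee_wpmul2r _ (logcov_le cover)) _.
  by rewrite lee_fin invr_ge0 mulr_ge0 // ltW.
by rewrite -EFinM lee_fin ln_block_count_le.
Qed.

Lemma mmdim_XK_le_inflated (c eta : R) : 0 < eta -> (dimK < c%:E)%E ->
  (upper_mmdim X sigma D <= (c * (1 + eta) / N%:R + eta)%:E)%E.
Proof.
move=> eta0 dim_lt.
have c0 : 0 < c by rewrite -lte_fin; apply: le_lt_trans dim_lt; exact: mink_dim_ge0.
have [d1 d1_gt0 small_d] := iffLR near_at_right0P (limf_esup_lt dim_lt).
apply: limf_esup_le; apply/near_at_right0P.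
exists (Num.min (Num.min 1 (20 * d1)) (expR (- (ln 20 / eta)))).
  by rewrite !lt_min ltr01 expR_gt0 mulr_gt0.
move=> eps eps0; rewrite !lt_min => /andP[/andP[eps1 eps_d1] eps_exp].
have ell0 : 0 < ln eps^-1 by rewrite ln_gt0 // invf_gt1.
have d0 : 0 < eps / 20 by rewrite divr_gt0.
have [d_lt1 d_lt] : eps / 20 < 1 /\ eps / 20 < d1 by split; lra.
have [n [Kn ln_n]] := cover_of_mink_ratio_lt d0 d_lt1 (small_d _ d0 d_lt).
apply: le_trans (limn_esup_XK_ratio_le eps0 eps1 eta0 Kn) _.
rewrite lee_fin lerD2r ler_pdivrMr ?mulr_gt0 ?ltr0n //.
have -> : c * (1 + eta) / N%:R * (N%:R * ln eps^-1) = c * ((1 + eta) * ln eps^-1).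
  by field; rewrite gt_eqF ?ltr0n.
apply: le_trans ln_n _; rewrite ler_pM2l //.
exact: ln_inv_div_le.
Qed.

Lemma mmdim_XK_le_of_mink_lt (c : R) : (dimK < c%:E)%E ->
  (upper_mmdim X sigma D <= (c / N%:R)%:E)%E.
Proof.
move=> dim_lt; apply/lee_addgt0Pr => e e0.
have c0 : 0 <= c by rewrite -lee_fin ltW // (le_lt_trans (mink_dim_ge0 _ _) dim_lt).
have Npos : 0 < N%:R :> R by rewrite ltr0n.
have scale_gt0 : 0 < c / N%:R + 1 by rewrite ltr_wpDl ?divr_ge0.
apply: le_trans (mmdim_XK_le_inflated (divr_gt0 e0 scale_gt0) dim_lt) _.
rewrite -EFinD lee_fin le_eqVlt; apply/orP; left; apply/eqP.
by field; apply/andP; split; rewrite gt_eqF //; lra.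
Qed.

End mean_dimension_bound.

Unset Implicit Arguments.

Theorem lemma5p1 (R : realType) (a N : nat) (K : set ('I_N -> 'I_a -> R)) :
  (0 < N)%N ->
  closed_cubeN K ->
  (upper_mmdim (p_XK K) (@p_shift R a) (@p_Dmetric R a)
     <= upper_mink_dim K (@supdistN R a N) * (N%:R^-1)%:E)%E.
Proof.
move=> N0 _.
have := mink_dim_ge0 K (@supdistN R a N).
case dimE : (upper_mink_dim K _) => [r| |] dim_ge0; last by [].
- rewrite -EFinM; apply/lee_addgt0Pr => e e0; rewrite -EFinD.
  have -> : r * N%:R^-1 + e = (r + e * N%:R) / N%:R by field; rewrite gt_eqF ?ltr0n.
  apply: mmdim_XK_le_of_mink_lt => //.
  by rewrite dimE lte_fin ltrDl mulr_gt0 ?ltr0n.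
- by rewrite gt0_mulye ?leey // lte_fin invr_gt0 ltr0n.
Qed.
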